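(* Let $A,B\in\mathrm{End}(\mathbb{R}^2)$ and consider the function $$F_{A,B}=\psi_B-\Big(\frac{\partial\psi_A}{\partial\theta}\Big)^2+\Big(\frac{\partial\psi_A}{\partial\phi}\Big)^2$$ on $\mathbb{T}$. (1) If $A\neq0$ is non-special, then for all $B$, $F_{A,B}$ is non-vanishing over an open dense subset of $Z_A$. (2) If $A\neq0$ is special and $B\neq0$ is not colinear with $A$, then $F_{A,B}$ is non-vanishing over an open dense subset of $Z_A$.
   Context: $\mathbb{T}=\mathbb{S}^1\times\mathbb{S}^1$ with coordinates $(\theta,\phi)$. For $A\in\mathrm{End}(\mathbb{R}^2)$, $\psi_A(\theta,\phi)=(\cos\theta,\sin\theta)A(\cos\phi,\sin\phi)^t$ and $Z_A=\psi_A^{-1}(\{0\})\subset\mathbb{T}$. A non-zero matrix $A$ is called special if it is a non-zero scalar multiple of an orthogonal matrix, and non-special otherwise. *)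

From Stdlib Require Import Reals.
From Coquelicot Require Import Coquelicot.
Open Scope R_scope.

Record Mat2 := mkMat2 { m11 : R; m12 : R; m21 : R; m22 : R }.

Definition mat0 : Mat2 := mkMat2 0 0 0 0.

Definition scale (c : R) (A : Mat2) : Mat2 :=
  mkMat2 (c * m11 A) (c * m12 A) (c * m21 A) (c * m22 A).

Definition orthogonal (O : Mat2) : Prop :=
  m11 O * m11 O + m21 O * m21 O = 1 /\
  m12 O * m12 O + m22 O * m22 O = 1 /\
  m11 O * m12 O + m21 O * m22 O = 0.

Definition special (A : Mat2) : Prop :=
  A <> mat0 /\ exists c O, c <> 0 /\ orthogonal O /\ A = scale c O.

Definition colinear (A B : Mat2) : Prop :=
  (exists c, B = scale c A) \/ (exists c, A = scale c B).

(* psi_A(theta,phi) = (cos theta, sin theta) A (cos phi, sin phi)^t,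
   with the torus coordinates (theta, phi) taken in R x R (2pi-periodic). *)
Definition psi (A : Mat2) (theta phi : R) : R :=
  cos theta * (m11 A * cos phi + m12 A * sin phi)
  + sin theta * (m21 A * cos phi + m22 A * sin phi).

Definition ZA (A : Mat2) (p : R * R) : Prop := psi A (fst p) (snd p) = 0.

Definition F (A B : Mat2) (theta phi : R) : R :=
  psi B theta phi
  - (Derive (fun t => psi A t phi) theta) ^ 2
  + (Derive (fun s => psi A theta s) phi) ^ 2.

Definition near (eps : R) (p q : R * R) : Prop :=
  Rabs (fst p - fst q) < eps /\ Rabs (snd p - snd q) < eps.

Definition rel_open (S U : R * R -> Prop) : Prop :=
  (forall p, U p -> S p) /\
  forall p, U p -> exists eps, eps > 0 /\
    forall q, S q -> near eps p q -> U q.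

Definition rel_dense (S U : R * R -> Prop) : Prop :=
  forall p, S p -> forall eps, eps > 0 -> exists q, U q /\ near eps p q.

Definition nonvanishing_open_dense (f : R -> R -> R) (S : R * R -> Prop) : Prop :=
  exists U, rel_open S U /\ rel_dense S U /\
    forall p, U p -> f (fst p) (snd p) <> 0.

From Stdlib Require Import Reals Lra Psatz List Classical.
From Coquelicot Require Import Coquelicot.
Open Scope R_scope.

(* F is continuous, so its non-vanishing locus in Z_A is relatively open and
   only density needs an argument.  Suppose F vanishes on Z_A near a point p.
   Translating p to the origin replaces A and B by R(a)^T A R(b) and
   R(a)^T B R(b), after which a11 = 0.  Near the origin Z_A then contains the
   line theta = 0 (if a12 = 0) or the curve
   tan phi = - a21 tan theta / (a12 + a22 tan theta) (if a12 <> 0).  Along it,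
   F = 0 becomes a polynomial identity in the tangent of the parameter which
   holds near 0, hence on all of C, in particular at i, where the psi_B term
   dies with the factor 1 + t^2.  On the line this forces a21 = a22 = 0, i.e.
   A = 0; on the curve it forces A^T A to be scalar, i.e. A special.  When A is
   special, the curve identity factors as a12^2 (1 + t^2)^2 P(t)^2 with P
   quadratic, and P = 0 says exactly that B is a multiple of A. *)

Lemma Rabs_le_linear_eq0 (a M e : R) :
  0 < e -> 0 <= M -> (forall t, 0 < t < e -> Rabs a <= t * M) -> a = 0.
Proof.
  intros he hM h; destruct (Req_dec a 0) as [|ha]; [assumption|exfalso].
  assert (hpos : 0 < Rabs a) by (apply Rabs_pos_lt; exact ha).
  set (t := Rmin e (Rabs a / (M + 1)) / 2).
  assert (h1 : Rmin e (Rabs a / (M + 1)) <= e) by apply Rmin_l.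
  assert (h2 : Rmin e (Rabs a / (M + 1)) <= Rabs a / (M + 1)) by apply Rmin_r.
  assert (h3 : 0 < Rmin e (Rabs a / (M + 1)))
    by (apply Rmin_glb_lt; [|apply Rdiv_lt_0_compat]; lra).
  assert (h4 : Rabs a / (M + 1) * (M + 1) = Rabs a) by (field; lra).
  assert (ht : Rabs a <= t * M) by (apply h; unfold t; lra).
  unfold t in ht; nra.
Qed.

Section ComplexPolynomials.

Local Open Scope C_scope.

Lemma Cmult_integral (x y : C) : x * y = 0 -> x = 0 \/ y = 0.
Proof.
  intros h; destruct (classic (x = 0)) as [hx|hx]; [left; exact hx | right].
  rewrite <- (Cmult_1_l y), <- (Cinv_l x hx), <- Cmult_assoc, h; ring.
Qed.

Lemma Cpow_eq0 z n : z ^ n = 0 -> z = 0.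
Proof. intros h; apply NNPP; intros hz; exact (Cpow_nz z n hz h). Qed.

Lemma one_plus_Ci_sq : 1 + Ci ^ 2 = 0.
Proof. apply injective_projections; simpl; ring. Qed.

Lemma C_parts_eq0 (z : C) : z = 0 -> Re z = 0%R /\ Im z = 0%R.
Proof. intros ->; split; reflexivity. Qed.

Fixpoint horner (l : list R) (z : C) : C :=
  match l with nil => 0 | a :: l => a + z * horner l z end.

Fixpoint poly_add (l m : list R) : list R :=
  match l, m with
  | nil, _ => m
  | _, nil => l
  | a :: l, b :: m => (a + b)%R :: poly_add l m
  end.

Fixpoint poly_mul (l m : list R) : list R :=
  match l with
  | nil => nil
  | a :: l => poly_add (map (Rmult a) m) (0%R :: poly_mul l m)
  end.

Lemma horner_add l m z : horner (poly_add l m) z = horner l z + horner m z.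
Proof.
  revert m; induction l as [|a l IH]; intros [|b m]; simpl; try ring.
  rewrite IH, RtoC_plus; ring.
Qed.

Lemma horner_scale a l z : horner (map (Rmult a) l) z = a * horner l z.
Proof. induction l as [|b l IH]; simpl; [ring|]. rewrite IH, RtoC_mult; ring. Qed.

Lemma horner_mul l m z : horner (poly_mul l m) z = horner l z * horner m z.
Proof.
  induction l as [|a l IH]; simpl; [ring|].
  rewrite horner_add, horner_scale; simpl; rewrite IH; ring.
Qed.

Lemma horner_bounded l :
  exists M, (0 <= M)%R /\ forall z, (Cmod z <= 1)%R -> (Cmod (horner l z) <= M)%R.
Proof.
  induction l as [|a l [M [hM IH]]]; simpl.
  - exists 0%R; split; [lra|]; intros z _; rewrite Cmod_0; lra.
  - exists (Rabs a + M)%R; split; [pose proof (Rabs_pos a); lra|]; intros z hz.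
    eapply Rle_trans; [apply Cmod_triangle|].
    rewrite Cmod_R, Cmod_mult.
    pose proof (Cmod_ge_0 (horner l z)); specialize (IH z hz); nra.
Qed.

(* The constant term is [O(t)] as [t -> 0+], hence zero; then divide by [t]. *)
Lemma horner_eq0 l d :
  (0 < d)%R -> (forall t : R, (0 < t < d)%R -> horner l t = 0) ->
  forall z, horner l z = 0.
Proof.
  intros hd; induction l as [|a l IH]; intros hl z; simpl; [reflexivity|].
  destruct (horner_bounded l) as [M [hM hbound]].
  assert (ha : a = 0%R).
  { apply (Rabs_le_linear_eq0 a M (Rmin d 1)); [apply Rmin_glb_lt; lra | exact hM |].
    intros t [ht0 ht1].
    assert (htd : (t < d)%R) by (eapply Rlt_le_trans; [exact ht1 | apply Rmin_l]).
    assert (ht1' : (t <= 1)%R)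
      by (left; eapply Rlt_le_trans; [exact ht1 | apply Rmin_r]).
    assert (hat : RtoC a = - (t * horner l t)).
    { specialize (hl t (conj ht0 htd)); simpl in hl.
      rewrite <- (Cplus_0_l (- _)), <- hl; ring. }
    apply (f_equal Cmod) in hat.
    rewrite Cmod_R, Cmod_opp, Cmod_mult, Cmod_R, (Rabs_pos_eq t) in hat by lra.
    rewrite hat; apply Rmult_le_compat_l; [lra|].
    apply hbound; rewrite Cmod_R, Rabs_pos_eq; lra. }
  assert (hl' : forall t : R, (0 < t < d)%R -> horner l t = 0).
  { intros t ht; specialize (hl t ht); simpl in hl; rewrite ha, Cplus_0_l in hl.
    destruct (Cmult_integral _ _ hl) as [h|h]; [|exact h].
    apply RtoC_inj in h; lra. }
  rewrite ha, (IH hl'); ring.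
Qed.

Definition polynomial (f : C -> C) : Prop :=
  exists l : list R, forall z, f z = horner l z.

Lemma polynomial_const (a : R) : polynomial (fun _ => a).
Proof. exists (a :: nil); intros z; simpl; ring. Qed.

Lemma polynomial_var : polynomial (fun z => z).
Proof. exists (0%R :: 1%R :: nil); intros z; simpl; ring. Qed.

Lemma polynomial_plus f g :
  polynomial f -> polynomial g -> polynomial (fun z => f z + g z).
Proof.
  intros [l hl] [m hm]; exists (poly_add l m); intros z.
  rewrite horner_add, hl, hm; reflexivity.
Qed.

Lemma polynomial_mult f g :
  polynomial f -> polynomial g -> polynomial (fun z => f z * g z).
Proof.
  intros [l hl] [m hm]; exists (poly_mul l m); intros z.
  rewrite horner_mul, hl, hm; reflexivity.
Qed.

Lemma polynomial_opp f : polynomial f -> polynomial (fun z => - f z).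
Proof.
  intros [l hl]; exists (map (Rmult (Ropp 1)) l); intros z.
  rewrite horner_scale, hl, RtoC_opp; ring.
Qed.

Lemma polynomial_minus f g :
  polynomial f -> polynomial g -> polynomial (fun z => f z - g z).
Proof. intros hf hg; apply polynomial_plus, polynomial_opp; assumption. Qed.

Lemma polynomial_pow f n : polynomial f -> polynomial (fun z => f z ^ n).
Proof.
  intros hf; induction n as [|n IH]; simpl.
  - apply polynomial_const.
  - apply polynomial_mult; assumption.
Qed.

Lemma polynomial_eq0 f :
  polynomial f -> locally 0%R (fun t : R => f t = 0) -> forall z, f z = 0.
Proof.
  intros [l hl] [d hd] z.
  rewrite hl; apply (horner_eq0 l d (cond_pos d)); intros t ht.
  rewrite <- hl; apply hd, Rabs_lt_between'; lra.
Qed.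

End ComplexPolynomials.

Ltac prove_polynomial :=
  cbv zeta;
  repeat first
   [ apply polynomial_const | apply polynomial_var | apply polynomial_plus
   | apply polynomial_minus | apply polynomial_mult | apply polynomial_opp
   | apply polynomial_pow ].

Ltac push_RtoC :=
  repeat progress rewrite ?RtoC_minus, ?RtoC_plus, ?RtoC_mult, ?RtoC_opp, ?RtoC_pow.

Lemma RtoC_scaled_sub_eq0 (c x y : R) : x = y -> (c * (x - y))%C = 0%C.
Proof. intros ->; ring. Qed.

Lemma locally_small (f : R -> R) x eps :
  ex_derive f x -> f x = 0 -> 0 < eps -> locally x (fun u => Rabs (f u) < eps).
Proof.
  intros hf hx he.
  apply ex_derive_continuous, continuity_pt_filterlim in hf.
  apply continuity_pt_locally with (eps := mkposreal eps he) in hf.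
  rewrite hx in hf; eapply filter_imp; [|exact hf]; intros u; simpl.
  rewrite Rminus_0_r; auto.
Qed.

Lemma nonvanishing_open_dense_intro (f : R -> R -> R) (S : R * R -> Prop) :
  (forall x y, continuity_2d_pt f x y) ->
  (forall p eps, S p -> eps > 0 ->
     ~ (forall q, S q -> near eps p q -> f (fst q) (snd q) = 0)) ->
  nonvanishing_open_dense f S.
Proof.
  intros hf hnz; exists (fun p => S p /\ f (fst p) (snd p) <> 0).
  split; [split|split].
  - intros p [hp _]; exact hp.
  - intros [x y] [_ hxy].
    destruct (continuity_2d_pt_neq_0 f x y (hf x y) hxy) as [d hd].
    exists d; split; [apply cond_pos|].
    intros [u v] hq [hu hv]; split; [exact hq|].
    apply hd; rewrite Rabs_minus_sym; assumption.
  - intros p hp eps heps; apply NNPP; intros hno.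
    apply (hnz p eps hp heps); intros q hq hpq; apply NNPP; intros hfq.
    apply hno; exists q; tauto.
  - intros p [_ hp]; exact hp.
Qed.

Definition bilin (A : Mat2) (x1 x2 y1 y2 : R) : R :=
  x1 * (m11 A * y1 + m12 A * y2) + x2 * (m21 A * y1 + m22 A * y2).

Definition psi_dtheta (A : Mat2) (th ph : R) : R :=
  bilin A (- sin th) (cos th) (cos ph) (sin ph).

Definition psi_dphi (A : Mat2) (th ph : R) : R :=
  bilin A (cos th) (sin th) (- sin ph) (cos ph).

Lemma F_explicit A B th ph :
  F A B th ph = psi B th ph - psi_dtheta A th ph ^ 2 + psi_dphi A th ph ^ 2.
Proof.
  unfold F; f_equal; [f_equal|]; f_equal; apply is_derive_unique;
    unfold psi, psi_dtheta, psi_dphi, bilin; auto_derive; trivial; ring.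
Qed.

Ltac continuity_2d :=
  repeat first
   [ apply continuity_2d_pt_plus
   | apply continuity_2d_pt_minus
   | apply continuity_2d_pt_mult
   | apply continuity_2d_pt_opp
   | apply continuity_2d_pt_const
   | apply (continuity_1d_2d_pt_comp cos (fun u _ => u));
       [apply continuity_cos | apply continuity_2d_pt_id1]
   | apply (continuity_1d_2d_pt_comp sin (fun u _ => u));
       [apply continuity_sin | apply continuity_2d_pt_id1]
   | apply (continuity_1d_2d_pt_comp cos (fun _ v => v));
       [apply continuity_cos | apply continuity_2d_pt_id2]
   | apply (continuity_1d_2d_pt_comp sin (fun _ v => v));
       [apply continuity_sin | apply continuity_2d_pt_id2] ].

Lemma F_continuous A B x y : continuity_2d_pt (F A B) x y.
Proof.
  eapply continuity_2d_pt_ext; [intros u v; symmetry; apply F_explicit|].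
  unfold psi, psi_dtheta, psi_dphi, bilin; simpl; continuity_2d.
Qed.

(* [rotate a b A] is the matrix [R(a)^T A R(b)], with [R] the rotation matrix:
   translating the torus by [(a, b)] turns [psi A] into [psi (rotate a b A)]. *)
Definition rotate (a b : R) (A : Mat2) : Mat2 :=
  mkMat2 (bilin A (cos a) (sin a) (cos b) (sin b))
         (bilin A (cos a) (sin a) (- sin b) (cos b))
         (bilin A (- sin a) (cos a) (cos b) (sin b))
         (bilin A (- sin a) (cos a) (- sin b) (cos b)).

Lemma psi_translate A a b x y : psi A (a + x) (b + y) = psi (rotate a b A) x y.
Proof. unfold psi, rotate, bilin; simpl; rewrite !cos_plus, !sin_plus; ring. Qed.

Lemma F_translate A B a b x y :
  F A B (a + x) (b + y) = F (rotate a b A) (rotate a b B) x y.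
Proof.
  rewrite !F_explicit; unfold psi, psi_dtheta, psi_dphi, rotate, bilin; simpl.
  rewrite !cos_plus, !sin_plus; ring.
Qed.

Lemma rotate_rotate a b a' b' A :
  rotate a b (rotate a' b' A) = rotate (a' + a) (b' + b) A.
Proof.
  unfold rotate, bilin; simpl; rewrite !cos_plus, !sin_plus; f_equal; ring.
Qed.

Lemma rotate_0 A : rotate 0 0 A = A.
Proof.
  destruct A; unfold rotate, bilin; simpl; rewrite cos_0, sin_0; f_equal; ring.
Qed.

Lemma rotateK a b A : rotate (- a) (- b) (rotate a b A) = A.
Proof. rewrite rotate_rotate, !Rplus_opp_r; apply rotate_0. Qed.

Lemma rotate_scale a b c A : rotate a b (scale c A) = scale c (rotate a b A).
Proof. unfold rotate, scale, bilin; simpl; f_equal; ring. Qed.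

Lemma rotate_mat0 a b : rotate a b mat0 = mat0.
Proof. unfold rotate, mat0, bilin; simpl; f_equal; ring. Qed.

Lemma rotate_eq_mat0 a b A : rotate a b A = mat0 <-> A = mat0.
Proof.
  split; intros h; [rewrite <- (rotateK a b A), h|rewrite h]; apply rotate_mat0.
Qed.

Lemma mat2_eq0 A :
  m11 A = 0 -> m12 A = 0 -> m21 A = 0 -> m22 A = 0 -> A = mat0.
Proof. destruct A; simpl; intros -> -> -> ->; reflexivity. Qed.

(* The discriminant of the Gram matrix [A^T A]. *)
Definition conformal_defect (A : Mat2) : R :=
  (m11 A ^ 2 + m21 A ^ 2 - m12 A ^ 2 - m22 A ^ 2) ^ 2
  + 4 * (m11 A * m12 A + m21 A * m22 A) ^ 2.

Lemma conformal_defect_m11_0 A :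
  m11 A = 0 ->
  conformal_defect A
  = (m12 A ^ 2 - m21 A ^ 2 - m22 A ^ 2) ^ 2 + 4 * (m12 A * m22 A) ^ 2.
Proof. intros h; unfold conformal_defect; rewrite h; ring. Qed.

Lemma cos_sin_sq a : cos a ^ 2 + sin a ^ 2 = 1.
Proof. rewrite <- (sin2_cos2 a); unfold Rsqr; ring. Qed.

Lemma conformal_defect_rotate a b A :
  conformal_defect (rotate a b A) = conformal_defect A.
Proof.
  transitivity (conformal_defect A * (cos a ^ 2 + sin a ^ 2) ^ 2
                                   * (cos b ^ 2 + sin b ^ 2) ^ 2).
  - unfold conformal_defect, rotate, bilin; simpl; ring.
  - rewrite !cos_sin_sq; ring.
Qed.

Lemma special_iff A : special A <-> A <> mat0 /\ conformal_defect A = 0.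
Proof.
  split.
  - intros [hA [c [O [_ [[h1 [h2 h3]] ->]]]]]; split; [exact hA|].
    transitivity (c ^ 4 * ((m11 O * m11 O + m21 O * m21 O
                            - (m12 O * m12 O + m22 O * m22 O)) ^ 2
                           + 4 * (m11 O * m12 O + m21 O * m22 O) ^ 2)).
    + unfold conformal_defect, scale; simpl; ring.
    + rewrite h1, h2, h3; ring.
  - intros [hA hd]; split; [exact hA|].
    unfold conformal_defect in hd.
    set (n := m11 A * m11 A + m21 A * m21 A).
    assert (hcols : n = m12 A * m12 A + m22 A * m22 A
                    /\ m11 A * m12 A + m21 A * m22 A = 0).
    { pose proof (pow2_ge_0 (m11 A ^ 2 + m21 A ^ 2 - m12 A ^ 2 - m22 A ^ 2)).
      pose proof (pow2_ge_0 (m11 A * m12 A + m21 A * m22 A)).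
      split; unfold n; nra. }
    assert (hn : 0 < n).
    { destruct (Rle_lt_or_eq_dec 0 n) as [|hn0]; [unfold n; nra | assumption |].
      exfalso; apply hA, mat2_eq0; unfold n in *; nra. }
    assert (hc : sqrt n * sqrt n = n) by (apply sqrt_sqrt; lra).
    assert (hc0 : 0 < sqrt n) by (apply sqrt_lt_R0; exact hn).
    set (c := sqrt n) in *; clearbody c.
    exists c, (scale (/ c) A); split; [lra|split].
    + destruct hcols as [e1 e2].
      assert (hcol1 : m11 A ^ 2 + m21 A ^ 2 = c ^ 2)
        by (replace (c ^ 2) with n by (rewrite <- hc; ring); unfold n; ring).
      assert (hcol2 : m12 A ^ 2 + m22 A ^ 2 = c ^ 2)
        by (replace (c ^ 2) with n by (rewrite <- hc; ring); rewrite e1; ring).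
      unfold orthogonal, scale; simpl.
      repeat split; field_simplify; try lra; rewrite ?hcol1, ?hcol2, ?e2; field; lra.
    + destruct A; unfold scale; simpl; f_equal; field; lra.
Qed.

Lemma special_rotate a b A : special (rotate a b A) <-> special A.
Proof. rewrite !special_iff, conformal_defect_rotate, rotate_eq_mat0; tauto. Qed.

Lemma cos_atan_pos t : 0 < cos (atan t).
Proof.
  rewrite cos_atan; apply Rdiv_lt_0_compat; [lra|].
  apply sqrt_lt_R0, Rplus_lt_le_0_compat; [lra | apply Rle_0_sqr].
Qed.

Lemma sin_atan_cos t : sin (atan t) = t * cos (atan t).
Proof.
  rewrite sin_atan, cos_atan; field.
  apply Rgt_not_eq, sqrt_lt_R0, Rplus_lt_le_0_compat; [lra | apply Rle_0_sqr].
Qed.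

Lemma cos_atan_sq t : cos (atan t) ^ 2 * (1 + t ^ 2) = 1.
Proof. rewrite <- (cos_sin_sq (atan t)) at 2; rewrite sin_atan_cos; ring. Qed.

Lemma psi_atan A t r :
  psi A (atan t) (atan r) = cos (atan t) * cos (atan r) * bilin A 1 t 1 r.
Proof. unfold psi, bilin; rewrite !sin_atan_cos; ring. Qed.

Lemma F_atan A B t r :
  F A B (atan t) (atan r) = 0 ->
  bilin B 1 t 1 r ^ 2 * ((1 + t ^ 2) * (1 + r ^ 2))
  = (bilin A (- t) 1 1 r ^ 2 - bilin A 1 t (- r) 1 ^ 2) ^ 2.
Proof.
  set (c := cos (atan t) * cos (atan r)).
  set (Q := bilin A (- t) 1 1 r ^ 2 - bilin A 1 t (- r) 1 ^ 2).
  assert (hc : 0 < c) by (apply Rmult_lt_0_compat; apply cos_atan_pos).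
  assert (hF : F A B (atan t) (atan r) = c * (bilin B 1 t 1 r - c * Q)).
  { rewrite F_explicit; unfold psi, psi_dtheta, psi_dphi, Q, c, bilin.
    rewrite !sin_atan_cos; ring. }
  rewrite hF; intros h0.
  destruct (Rmult_integral _ _ h0) as [|hB]; [lra|].
  replace (bilin B 1 t 1 r) with (c * Q) by lra.
  transitivity (cos (atan t) ^ 2 * (1 + t ^ 2) * (cos (atan r) ^ 2 * (1 + r ^ 2)) * Q ^ 2);
    [unfold c; ring | rewrite !cos_atan_sq; ring].
Qed.

Definition F_vanishes_near0 (A B : Mat2) (eps : R) : Prop :=
  forall x y, Rabs x < eps -> Rabs y < eps -> psi A x y = 0 -> F A B x y = 0.

Lemma F_vanishes_near0_translate A B a b eps :
  (forall q, ZA A q -> near eps (a, b) q -> F A B (fst q) (snd q) = 0) ->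
  F_vanishes_near0 (rotate a b A) (rotate a b B) eps.
Proof.
  intros h x y hx hy hpsi; rewrite <- F_translate.
  apply (h (a + x, b + y)); unfold ZA, near; simpl.
  - rewrite psi_translate; exact hpsi.
  - replace (a - (a + x)) with (- x) by ring; replace (b - (b + y)) with (- y) by ring.
    rewrite !Rabs_Ropp; split; assumption.
Qed.

(* [F_atan] along the line [theta = 0] and along the curve
   [tan phi = N / D] of [Z_A], with the denominators cleared. *)
Definition line_poly (A B : Mat2) (z : C) : C :=
  ((m11 B + m12 B * z) ^ 2 * (1 + z ^ 2) - (m21 A + m22 A * z) ^ 4)%C.

Definition curve_poly (A B : Mat2) (z : C) : C :=
  let D := (m12 A + m22 A * z)%C in
  let N := (- (m21 A * z))%C in
  let X := (m11 B * D + m12 B * N + z * (m21 B * D + m22 B * N))%C in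
  (X ^ 2 * (1 + z ^ 2) * (D ^ 2 + N ^ 2)
   - (m12 A ^ 2 * m21 A ^ 2 * (1 + z ^ 2) ^ 2 - (D ^ 2 + N ^ 2) ^ 2) ^ 2)%C.

Lemma line_poly_locally_zero A B eps :
  m11 A = 0 -> m12 A = 0 -> 0 < eps -> F_vanishes_near0 A B eps ->
  locally 0 (fun r : R => line_poly A B r = 0%C).
Proof.
  intros h11 h12 he hnull.
  eapply filter_imp;
    [|apply (locally_small atan); [auto_derive; trivial | exact atan_0 | exact he]].
  intros r hr.
  assert (hF : F A B (atan 0) (atan r) = 0).
  { apply hnull; [rewrite atan_0, Rabs_R0; exact he | exact hr |].
    rewrite psi_atan; unfold bilin; rewrite h11, h12; ring. }
  apply F_atan in hF.
  etransitivity; [|exact (RtoC_scaled_sub_eq0 1 _ _ hF)].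
  unfold line_poly, bilin; rewrite h11, h12; push_RtoC; ring.
Qed.

Lemma curve_poly_locally_zero A B eps :
  m11 A = 0 -> m12 A <> 0 -> 0 < eps -> F_vanishes_near0 A B eps ->
  locally 0 (fun t : R => curve_poly A B t = 0%C).
Proof.
  intros h11 h12 he hnull.
  set (r t := - (m21 A * t) / (m12 A + m22 A * t)).
  assert (hsmall : locally 0 (fun t => Rabs (m22 A * t) < Rabs (m12 A)
                     /\ Rabs (atan t) < eps /\ Rabs (atan (r t)) < eps)).
  { repeat apply filter_and.
    - apply (locally_small (fun t => m22 A * t));
        [auto_derive; trivial | ring | apply Rabs_pos_lt; exact h12].
    - apply (locally_small atan); [auto_derive; trivial | exact atan_0 | exact he].
    - apply (locally_small (fun t => atan (r t))); [unfold r | | exact he].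
      + auto_derive; rewrite Rmult_0_r, Rplus_0_r; exact h12.
      + unfold r; rewrite Rmult_0_r, Ropp_0, Rdiv_0_l; exact atan_0. }
  eapply filter_imp; [|exact hsmall]; intros t [hD [ht hr]].
  assert (hD0 : m12 A + m22 A * t <> 0).
  { intros h; replace (m22 A * t) with (- m12 A) in hD by lra.
    rewrite Rabs_Ropp in hD; lra. }
  assert (hF : F A B (atan t) (atan (r t)) = 0).
  { apply hnull; [exact ht | exact hr |].
    rewrite psi_atan; replace (bilin A 1 t 1 (r t)) with 0; [ring|].
    unfold bilin, r; rewrite h11; field; exact hD0. }
  apply F_atan in hF.
  etransitivity; [|exact (RtoC_scaled_sub_eq0 ((m12 A + m22 A * t) ^ 4) _ _ hF)].
  unfold curve_poly, bilin, r; rewrite h11; push_RtoC.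
  rewrite RtoC_div by exact hD0; push_RtoC.
  field.
  rewrite <- RtoC_mult, <- RtoC_plus; intros h; apply RtoC_inj in h; contradiction.
Qed.

Lemma F_vanishes_line_mat0 A B eps :
  m11 A = 0 -> m12 A = 0 -> 0 < eps -> F_vanishes_near0 A B eps -> A = mat0.
Proof.
  intros h11 h12 he hnull.
  assert (h0 : line_poly A B Ci = 0%C).
  { apply polynomial_eq0; [unfold line_poly; prove_polynomial|].
    exact (line_poly_locally_zero A B eps h11 h12 he hnull). }
  assert (h : ((m21 A + m22 A * Ci) ^ 4 = - line_poly A B Ci)%C)
    by (unfold line_poly; rewrite one_plus_Ci_sq; ring).
  rewrite h0, Copp_0 in h.
  destruct (C_parts_eq0 _ (Cpow_eq0 _ _ h)) as [hre him]; simpl in hre, him.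
  apply mat2_eq0; [exact h11 | exact h12 | lra | lra].
Qed.

Lemma F_vanishes_curve_conformal A B eps :
  m11 A = 0 -> m12 A <> 0 -> 0 < eps -> F_vanishes_near0 A B eps ->
  conformal_defect A = 0.
Proof.
  intros h11 h12 he hnull.
  assert (h0 : curve_poly A B Ci = 0%C).
  { apply polynomial_eq0; [unfold curve_poly; prove_polynomial|].
    exact (curve_poly_locally_zero A B eps h11 h12 he hnull). }
  assert (h : (((m12 A + m22 A * Ci) ^ 2 + (m21 A * Ci) ^ 2) ^ 4
               = - curve_poly A B Ci)%C)
    by (unfold curve_poly; rewrite one_plus_Ci_sq; ring).
  rewrite h0, Copp_0 in h.
  destruct (C_parts_eq0 _ (Cpow_eq0 _ _ h)) as [hre him]; simpl in hre, him.
  ring_simplify in hre; ring_simplify in him.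
  rewrite conformal_defect_m11_0 by exact h11; nra.
Qed.

Definition special_poly (A B : Mat2) (z : C) : C :=
  (m11 B * m12 A + (m21 B * m12 A - m12 B * m21 A) * z - m22 B * m21 A * z ^ 2)%C.

Lemma curve_poly_special A B z :
  m22 A = 0 -> m21 A ^ 2 = m12 A ^ 2 ->
  curve_poly A B z = (m12 A ^ 2 * (1 + z ^ 2) ^ 2 * special_poly A B z ^ 2)%C.
Proof.
  intros h22 h21.
  assert (hs : m21 A = m12 A \/ m21 A = - m12 A) by (apply Rsqr_eq; unfold Rsqr; lra).
  unfold curve_poly, special_poly; rewrite h22.
  destruct hs as [-> | ->]; rewrite ?RtoC_opp; ring.
Qed.

Lemma special_m11_0 A :
  m11 A = 0 -> special A -> m12 A <> 0 /\ m22 A = 0 /\ m21 A ^ 2 = m12 A ^ 2.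
Proof.
  intros h11 hs; apply special_iff in hs as [hA hd].
  rewrite conformal_defect_m11_0 in hd by exact h11.
  pose proof (pow2_ge_0 (m12 A ^ 2 - m21 A ^ 2 - m22 A ^ 2)).
  pose proof (pow2_ge_0 (m12 A * m22 A)).
  assert (e1 : m12 A ^ 2 = m21 A ^ 2 + m22 A ^ 2) by nra.
  assert (e2 : m12 A * m22 A = 0) by nra.
  assert (h12 : m12 A <> 0).
  { intros h12; apply hA, mat2_eq0; [exact h11 | exact h12 | nra | nra]. }
  assert (h22 : m22 A = 0)
    by (destruct (Rmult_integral _ _ e2); [contradiction | assumption]).
  repeat split; [exact h12 | exact h22 | rewrite e1, h22; ring].
Qed.

Lemma special_poly_locally_zero A B eps :
  m11 A = 0 -> special A -> 0 < eps -> F_vanishes_near0 A B eps ->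
  locally 0 (fun t : R => special_poly A B t = 0%C).
Proof.
  intros h11 hs he hnull.
  destruct (special_m11_0 A h11 hs) as [h12 [h22 h21]].
  eapply filter_imp; [|exact (curve_poly_locally_zero A B eps h11 h12 he hnull)].
  intros t ht; cbv beta in ht; rewrite curve_poly_special in ht by assumption.
  destruct (Cmult_integral _ _ ht) as [h | h]; [|exact (Cpow_eq0 _ _ h)].
  exfalso; destruct (Cmult_integral _ _ h) as [h' | h'];
    apply Cpow_eq0 in h'; [apply RtoC_inj in h'; contradiction|].
  rewrite <- RtoC_pow, <- RtoC_plus in h'; apply RtoC_inj in h'.
  pose proof (pow2_ge_0 t); lra.
Qed.

Lemma F_vanishes_special_scale A B eps :
  m11 A = 0 -> special A -> 0 < eps -> F_vanishes_near0 A B eps ->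
  exists c, B = scale c A.
Proof.
  intros h11 hs he hnull.
  destruct (special_m11_0 A h11 hs) as [h12 [h22 h21]].
  assert (hpoly : polynomial (special_poly A B))
    by (unfold special_poly; prove_polynomial).
  pose proof (polynomial_eq0 _ hpoly (special_poly_locally_zero A B eps h11 hs he hnull))
    as hzero.
  destruct (C_parts_eq0 _ (hzero 0%C)) as [h0 _].
  destruct (C_parts_eq0 _ (hzero Ci)) as [hre him].
  simpl in h0, hre, him; ring_simplify in h0; ring_simplify in hre; ring_simplify in him.
  exists (m12 B / m12 A).
  destruct A as [a11 a12 a21 a22], B as [b11 b12 b21 b22]; simpl in *; subst a11 a22.
  assert (hb11 : b11 = 0)
    by (destruct (Rmult_integral _ _ h0); [assumption | contradiction]).
  assert (ha21 : a21 <> 0) by (intros ->; apply h12; nra).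
  assert (hb22 : b22 = 0).
  { rewrite hb11 in hre.
    destruct (Rmult_integral a21 b22); [lra | contradiction | assumption]. }
  unfold scale; simpl; f_equal.
  - rewrite hb11; ring.
  - field; exact h12.
  - apply (Rmult_eq_reg_l a12); [|exact h12].
    transitivity (b12 * a21); [lra | field; exact h12].
  - rewrite hb22; ring.
Qed.

Lemma nonspecial_not_F_vanishes A B eps :
  m11 A = 0 -> A <> mat0 -> ~ special A -> 0 < eps -> ~ F_vanishes_near0 A B eps.
Proof.
  intros h11 hA hs he hnull; destruct (Req_dec (m12 A) 0) as [h12 | h12].
  - exact (hA (F_vanishes_line_mat0 A B eps h11 h12 he hnull)).
  - apply hs, special_iff; split; [exact hA|].
    exact (F_vanishes_curve_conformal A B eps h11 h12 he hnull).
Qed.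

Lemma F_nonspecial_nonvanishing A B :
  A <> mat0 -> ~ special A -> nonvanishing_open_dense (F A B) (ZA A).
Proof.
  intros hA hs; apply nonvanishing_open_dense_intro; [apply F_continuous|].
  intros [a b] eps hp he hnull.
  apply (nonspecial_not_F_vanishes (rotate a b A) (rotate a b B) eps).
  - exact hp.
  - rewrite rotate_eq_mat0; exact hA.
  - rewrite special_rotate; exact hs.
  - exact he.
  - apply F_vanishes_near0_translate; exact hnull.
Qed.

Lemma F_special_nonvanishing A B :
  special A -> ~ colinear A B -> nonvanishing_open_dense (F A B) (ZA A).
Proof.
  intros hs hc; apply nonvanishing_open_dense_intro; [apply F_continuous|].
  intros [a b] eps hp he hnull.
  destruct (F_vanishes_special_scale (rotate a b A) (rotate a b B) eps) as [c hB].
  - exact hp.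
  - rewrite special_rotate; exact hs.
  - exact he.
  - apply F_vanishes_near0_translate; exact hnull.
  - apply hc; left; exists c.
    rewrite <- (rotateK a b B), hB, rotate_scale, rotateK; reflexivity.
Qed.

Theorem lemma2p6 :
  (forall A B : Mat2, A <> mat0 -> ~ special A ->
     nonvanishing_open_dense (F A B) (ZA A)) /\
  (forall A B : Mat2, A <> mat0 -> special A -> B <> mat0 -> ~ colinear A B ->
     nonvanishing_open_dense (F A B) (ZA A)).
Proof.
  split.
  - exact F_nonspecial_nonvanishing.
  - (* Both [A <> mat0] and [B <> mat0] follow from the other hypotheses. *)
    intros A B _ hs _ hc; exact (F_special_nonvanishing A B hs hc).
Qed.
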